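(* Let $G$ be a graph and $k$ a positive integer, and let $X$ be the set of vertices of $G$ that do not lie in any subgraph of $G$ with minimum degree at least $k$. If $|X| \geq k$, then $\sum_{v \in X} \deg_G(v) \leq 2(k-1)|X| - \binom{k}{2}$.
   Context: All graphs are finite, simple and undirected; $\deg_G(v)$ denotes the degree of $v$ in $G$. *)

From mathcomp Require Import all_boot.
Set Implicit Arguments. Unset Strict Implicit. Unset Printing Implicit Defensive.

Definition simple_graph (T : finType) (e : rel T) : Prop :=
  symmetric e /\ irreflexive e.

Definition deg (T : finType) (e : rel T) (v : T) : nat := #|[set u | e v u]|.

Definition is_subgraph (T : finType) (e : rel T) (S : {set T}) (f : rel T) : Prop :=
  symmetric f /\ (forall x y, f x y -> [/\ x \in S, y \in S & e x y]).

Definition sub_deg (T : finType) (S : {set T}) (f : rel T) (v : T) : nat :=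
  #|[set u in S | f v u]|.

Definition in_k_core_sub (T : finType) (e : rel T) (k : nat) (v : T) : Prop :=
  exists (S : {set T}) (f : rel T),
    [/\ is_subgraph e S f, v \in S & forall w, w \in S -> k <= sub_deg S f w].

(* Every nonempty Y contained in X has a vertex v with fewer than k neighbours
   in Y together with the vertices outside X: otherwise Y and the complement
   of X would induce a subgraph of minimum degree at least k, since every
   vertex outside X has at least k neighbours outside X.  Deleting such
   vertices one at a time, the j-th deleted vertex (counting back from the
   last) accounts for at most (k-1) + min(k-1, j) to the degree sum of X,
   and summing over j < |X| with |X| >= k gives 2(k-1)|X| - C(k,2). *)

From mathcomp Require Import all_boot zify.
From Stdlib Require Import Classical.

Set Implicit Arguments. Unset Strict Implicit. Unset Printing Implicit Defensive.

Section Peeling.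

Variables (T : finType) (Z : {set T}) (g : {set T} -> nat) (c : nat -> nat).

Hypothesis peel : forall Y : {set T}, Y \subset Z -> Y != set0 ->
  exists2 v, v \in Y & g Y <= g (Y :\ v) + c #|Y :\ v|.

Lemma leq_peel_sum (Y : {set T}) :
  Y \subset Z -> g Y <= g set0 + \sum_(j < #|Y|) c j.
Proof.
move cardY: #|Y| => n; elim: n Y cardY => [|n IH] Y cardY sYZ.
  by move/eqP: cardY; rewrite cards_eq0 => /eqP ->; rewrite big_ord0 addn0.
have [|v vY le_gY] := peel sYZ; first by rewrite -cards_eq0 cardY.
have cardYv : #|Y :\ v| = n by move: cardY; rewrite (cardsD1 v) vY => -[].
rewrite cardYv in le_gY; apply: leq_trans le_gY _.
rewrite big_ord_recr /= addnA leq_add2r.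
by apply: IH cardYv (subset_trans (subsetDl Y [set v]) sYZ).
Qed.

End Peeling.

Lemma sum_mem_card (T : finType) (A B : {set T}) :
  \sum_(w in A) (w \in B) = #|A :&: B|.
Proof.
rewrite -sum1_card big_mkcond [RHS]big_mkcond /=; apply: eq_bigr => w _.
by rewrite inE; case: (w \in A); case: (w \in B).
Qed.

Lemma cardsI_UC (T : finType) (A X Y : {set T}) : Y \subset X ->
  #|A :&: (Y :|: ~: X)| = #|A :&: Y| + #|A :\: X|.
Proof.
move=> sYX; rewrite setIUr -setDE cardsU.
suff -> : (A :&: Y) :&: (A :\: X) = set0 by rewrite cards0 subn0.
apply/setP => u; rewrite !inE.
by case: (boolP (u \in Y)) => [/(subsetP sYX) -> | _]; rewrite ?andbF.
Qed.

Lemma sum_peel_cost (k n : nat) :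
  k <= n -> \sum_(j < n) (k.-1 + minn k.-1 j) + 'C(k, 2) = 2 * (k - 1) * n.
Proof.
move=> le_kn.
have sum_min : \sum_(j < n) minn k.-1 j = 'C(k, 2) + (n - k) * k.-1.
  rewrite -(big_mkord xpredT) (big_cat_nat (leq0n k) le_kn) /=.
  rewrite -bin2_sum -sum_nat_const_nat; congr (_ + _).
    by apply: eq_big_nat => j /andP[_ lt_jk]; apply/minn_idPr; lia.
  by apply: eq_big_nat => j /andP[le_kj _]; apply/minn_idPl; lia.
have twice_bin2 : 'C(k, 2) + 'C(k, 2) = k * k.-1.
  rewrite addnn bin2 even_halfK //; case: (k) => //= k'.
  by rewrite oddM /=; case: (odd k').
rewrite big_split /= sum_nat_const card_ord sum_min.
nia.
Qed.

Section SimpleGraph.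

Variables (T : finType) (e : rel T).
Hypotheses (e_sym : symmetric e) (e_irr : irreflexive e).

Definition nbrs (v : T) : {set T} := [set u | e v u].

Lemma in_k_core_sub_induced (k : nat) (S : {set T}) (v : T) :
  (forall w, w \in S -> k <= #|nbrs w :&: S|) -> v \in S -> in_k_core_sub e k v.
Proof.
move=> degS vS.
exists S, (fun a b => [&& a \in S, b \in S & e a b]); split => //.
- split=> [a b | a b /and3P[]] //=.
  by rewrite e_sym andbCA.
- move=> w wS; apply: leq_trans (degS w wS) (eq_leq _).
  by apply: eq_card => u; rewrite !inE wS andbC; case: (u \in S).
Qed.

Lemma sum_nbrs_setD1 (Y : {set T}) (v : T) : v \in Y ->
  \sum_(w in Y) #|nbrs w :&: Y|
    = \sum_(w in Y :\ v) #|nbrs w :&: (Y :\ v)| + 2 * #|nbrs v :&: Y|.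
Proof.
move=> vY.
have nbrsY_D1 : nbrs v :&: Y = nbrs v :&: (Y :\ v).
  by apply/setP => u; rewrite !inE; case: eqP => // ->; rewrite e_irr.
rewrite (big_setD1 v vY) /= addnC.
under eq_bigr => w _ do rewrite (cardsD1 v) -setIDA in_setI vY andbT.
rewrite big_split /=.
have -> : \sum_(w in Y :\ v) (v \in nbrs w) = #|nbrs v :&: Y|.
  rewrite nbrsY_D1 setIC -sum_mem_card.
  by apply: eq_bigr => w _; rewrite !inE e_sym.
lia.
Qed.

Section NonCore.

Variables (k : nat) (X : {set T}).
Hypothesis X_noncore : forall v, v \in X <-> ~ in_k_core_sub e k v.

Lemma card_nbrs_outside (v : T) : v \notin X -> k <= #|nbrs v :\: X|.
Proof.
move=> vX.
have [S [f [subgraph_f vS degS]]] : in_k_core_sub e k v.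
  by apply: NNPP => not_core; move/negP: vX; apply; apply/X_noncore.
have S_core w : w \in S -> w \notin X.
  by move=> wS; apply/negP => /X_noncore; apply; exists S, f.
apply: leq_trans (degS v vS) (subset_leq_card _).
apply/subsetP => u; rewrite !inE => /andP[uS /subgraph_f.2[_ _ evu]].
by rewrite evu andbT S_core.
Qed.

Lemma exists_low_nbrs (Y : {set T}) : Y \subset X -> Y != set0 ->
  exists2 v, v \in Y & #|nbrs v :&: Y| + #|nbrs v :\: X| < k.
Proof.
move=> sYX /set0Pn[y yY].
have [/exists_inP[v vY low] | /exists_inPn high] :=
  boolP [exists v in Y, #|nbrs v :&: Y| + #|nbrs v :\: X| < k].
  by exists v.
exfalso; apply: (proj1 (X_noncore y)) (subsetP sYX y yY) _.
apply: (@in_k_core_sub_induced k (Y :|: ~: X)); last by rewrite inE yY.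
move=> w; rewrite cardsI_UC // !inE => /orP[wY | wX].
  by rewrite leqNgt high.
exact: leq_trans (card_nbrs_outside wX) (leq_addl _ _).
Qed.

(* For [Y \subset X], the degree sum of [Y] in the subgraph induced by
   [Y :|: ~: X] (see [cardsI_UC]). *)
Definition deg_sum_in (Y : {set T}) : nat :=
  \sum_(v in Y) (#|nbrs v :&: Y| + #|nbrs v :\: X|).

(* Removing [v] with [b] neighbours in [Y] and [a] outside [X] lowers the sum
   by [2 b + a], and [a + b < k], [b <= #|Y :\ v|]. *)
Lemma deg_sum_in_peel (Y : {set T}) : Y \subset X -> Y != set0 ->
  exists2 v, v \in Y &
    deg_sum_in Y <= deg_sum_in (Y :\ v) + (k.-1 + minn k.-1 #|Y :\ v|).
Proof.
move=> sYX Y0; have [v vY low] := exists_low_nbrs sYX Y0; exists v => //.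
have inner_le : #|nbrs v :&: Y| <= #|Y :\ v|.
  apply/subset_leq_card/subsetP => u; rewrite !inE => /andP[evu ->].
  by rewrite andbT; apply: contraTneq evu => ->; rewrite e_irr.
rewrite /deg_sum_in big_split /= (sum_nbrs_setD1 vY) (big_setD1 v vY) /= big_split /=.
lia.
Qed.

Lemma deg_sum_in_le : deg_sum_in X <= \sum_(j < #|X|) (k.-1 + minn k.-1 j).
Proof.
have := leq_peel_sum (c := fun j => k.-1 + minn k.-1 j) deg_sum_in_peel (subxx X).
by rewrite /deg_sum_in big_set0.
Qed.

Lemma deg_sum_in_self : deg_sum_in X = \sum_(v in X) deg e v.
Proof. by apply: eq_bigr => v _; rewrite cardsID. Qed.

End NonCore.

End SimpleGraph.

Theorem lemma2p2 (T : finType) (e : rel T) (k : nat) (X : {set T}) :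
  simple_graph e -> 0 < k ->
  (forall v : T, v \in X <-> ~ in_k_core_sub e k v) ->
  k <= #|X| ->
  (\sum_(v in X) deg e v) + 'C(k, 2) <= 2 * (k - 1) * #|X|.
Proof.
(* The bound holds for [k = 0] as well. *)
move=> [e_sym e_irr] _ X_noncore le_kX.
rewrite -deg_sum_in_self -(sum_peel_cost le_kX) leq_add2r.
exact: deg_sum_in_le.
Qed.
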